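(* A nontrivial monoid $M$ in $\mathcal{C}$ is an HFM if and only if $\mathcal{A}(M)$ is contained in an affine hyperplane $H$ of $V=\mathbb{R}\otimes_\mathbb{Z}\mathrm{gp}(M)$ not containing the origin; moreover, in that case $\mathcal{A}(M)=M\cap H$.
   Context: Convention: all monoids are commutative, cancellative, and reduced, written additively; $M^\bullet=M\setminus\{0\}$; atoms $\mathcal{A}(M)=M^\bullet\setminus(M^\bullet+M^\bullet)$. $\mathcal{C}$ is the class of monoids isomorphic to a submonoid of a free commutative monoid of finite rank (equivalently, of $(\mathbb{N}^d,+)$). $M$ is regarded as a submonoid of $V$ via $M\hookrightarrow\mathrm{gp}(M)\hookrightarrow V$. A factorization of $x$ is a multiset of atoms summing to $x$, its length the number of atoms with multiplicity; $M$ is an HFM (half-factorial) if every element is a sum of atoms and any two factorizations of the same nonzero element have the same length. *)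

From HB Require Import structures.
From mathcomp Require Import all_boot all_order all_algebra.
Set Implicit Arguments. Unset Strict Implicit. Unset Printing Implicit Defensive.
Import Order.TTheory GRing.Theory Num.Theory.

Definition nvec (d : nat) := {ffun 'I_d -> nat}.
Definition vzero (d : nat) : nvec d := [ffun => 0%N].
Definition vadd (d : nat) (x y : nvec d) : nvec d := [ffun i => (x i + y i)%N].
Definition vsum (d : nat) (s : seq (nvec d)) : nvec d := foldr (@vadd d) (vzero d) s.

(* A monoid in the class C, given as a submonoid of (N^d,+). *)
Definition is_submonoid (d : nat) (M : nvec d -> Prop) : Prop :=
  M (vzero d) /\ (forall x y, M x -> M y -> M (vadd x y)).

Definition nontrivial (d : nat) (M : nvec d -> Prop) : Prop :=
  exists x, M x /\ x <> vzero d.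

Definition is_atom (d : nat) (M : nvec d -> Prop) (a : nvec d) : Prop :=
  M a /\ a <> vzero d /\
  ~ (exists b c, M b /\ M c /\ b <> vzero d /\ c <> vzero d /\ a = vadd b c).

Definition is_factorization (d : nat) (M : nvec d -> Prop) (x : nvec d)
  (s : seq (nvec d)) : Prop :=
  (forall a, a \in s -> is_atom M a) /\ vsum s = x.

Definition HFM (d : nat) (M : nvec d -> Prop) : Prop :=
  (forall x, M x -> exists s, is_factorization M x s) /\
  (forall x s t, M x -> x <> vzero d ->
     is_factorization M x s -> is_factorization M x t -> size s = size t).

(* The embedding M -> gp(M) -> V, with V realised inside R^d. *)
Definition embed (R : realFieldType) (d : nat) (x : nvec d) : 'rV[R]_d :=
  \row_i ((x i)%:R)%R.

(* V = R (x)_Z gp(M), realised as the R-linear span of M in R^d. *)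
Definition in_V (R : realFieldType) (d : nat) (M : nvec d -> Prop)
  (v : 'rV[R]_d) : Prop :=
  exists (s : seq (nvec d)) (c : seq R),
    (forall x, x \in s -> M x) /\ size c = size s /\
    (v = \sum_(i < size s) (nth 0%R c i) *: embed R (nth (vzero d) s i))%R.

Definition dotv (R : realFieldType) (d : nat) (w v : 'rV[R]_d) : R :=
  \sum_(i < d) (w 0 i * v 0 i)%R.

Definition affine_hyperplane_of_V (R : realFieldType) (d : nat)
  (M : nvec d -> Prop) (H : 'rV[R]_d -> Prop) : Prop :=
  exists (w : 'rV[R]_d) (c : R),
    (exists v, in_V M v /\ dotv w v != 0%R) /\
    (forall v, H v <-> (in_V M v /\ dotv w v = c)).

From HB Require Import structures.
From mathcomp Require Import all_boot all_order all_algebra.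
From mathcomp Require Import zify.
From Stdlib Require Import Classical ClassicalEpsilon.
Import Order.TTheory GRing.Theory Num.Theory.
Set Implicit Arguments. Unset Strict Implicit.

(* Every submonoid of N^d is atomic: the coordinate sum of N^d is an additive
   weight that is positive off 0, so induction on it factors every element.
   (<=) If all atoms satisfy <w, a> = c with c <> 0, then a factorization s
   of x gives <w, x> = size(s) * c, so all factorizations of x have the
   length <w, x> / c: M is half-factorial, and an element of M on the
   hyperplane (length 1) is an atom.
   (=>) If M is half-factorial, the length function ell is additive on M.
   Clearing denominators turns a rational linear relation among elements of
   M into an identity in M, so ell respects all rational relations. Choosing
   elements of M whose images form a basis of their rational span, we solve
   for a rational functional w agreeing with ell on this basis, hence on all
   of M; the hyperplane <w, v> = 1 of V then contains every atom and misses 0.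
   The file develops these steps in this order and assembles them last. *)

Section FreeMonoid.
Variable d : nat.
Implicit Types x y z : nvec d.

Lemma vaddA x y z : vadd x (vadd y z) = vadd (vadd x y) z.
Proof. by apply/ffunP=> i; rewrite !ffunE addnA. Qed.

Lemma vadd0 x : vadd (vzero d) x = x.
Proof. by apply/ffunP=> i; rewrite !ffunE. Qed.

Lemma vaddv0 x : vadd x (vzero d) = x.
Proof. by apply/ffunP=> i; rewrite !ffunE addn0. Qed.

Lemma vsum_cat (s t : seq (nvec d)) : vsum (s ++ t) = vadd (vsum s) (vsum t).
Proof. by elim: s => [|a s IH] /=; rewrite ?vadd0 // IH vaddA. Qed.

Definition nmul k x := iter k (vadd x) (vzero d).

Definition weight x := (\sum_(i < d) x i)%N.

Lemma weightD x y : weight (vadd x y) = (weight x + weight y)%N.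
Proof. by rewrite /weight -big_split; apply: eq_bigr => i _; rewrite ffunE. Qed.

Lemma weight0 : weight (vzero d) = 0%N.
Proof. by rewrite /weight big1 // => i _; rewrite ffunE. Qed.

Lemma weight_gt0 x : x <> vzero d -> (0 < weight x)%N.
Proof.
move=> nz; rewrite lt0n; apply/negP => /eqP w0; apply: nz; apply/ffunP => i.
by rewrite ffunE; apply/eqP; rewrite -leqn0 -w0 /weight (bigD1 i) //= leq_addr.
Qed.

Variable M : nvec d -> Prop.

Lemma factorization_exists x : M x -> exists s, is_factorization M x s.
Proof.
elim: {x}(weight x) {-2}x (leqnn (weight x)) => [|n IH] x le Mx.
  exists [::]; split => //; case: (classic (x = vzero d)) => [->//|nz].
  by have := weight_gt0 nz; rewrite leqn0 in le; rewrite (eqP le).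
case: (classic (x = vzero d)) => [->|nz]; first by exists [::].
case: (classic (is_atom M x)) => [xat|xnat].
  exists [:: x]; split; last by rewrite /= vaddv0.
  by move=> a; rewrite inE => /eqP ->.
have [b [c [Mb [Mc [bnz [cnz Ex]]]]]] :
    exists b c, M b /\ M c /\ b <> vzero d /\ c <> vzero d /\ x = vadd b c.
  by apply: NNPP => nodec; apply: xnat.
subst x; move: le; rewrite weightD => le.
have [sb [Hsb <-]] : exists s, is_factorization M b s.
  by apply: IH => //; have := weight_gt0 cnz; lia.
have [sc [Hsc <-]] : exists s, is_factorization M c s.
  by apply: IH => //; have := weight_gt0 bnz; lia.
exists (sb ++ sc); split; last by rewrite vsum_cat.
by move=> a; rewrite mem_cat => /orP [/Hsb|/Hsc].
Qed.

(* Atoms are nonzero, so 0 has only the empty factorization. *)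
Lemma factorization_zero (s : seq (nvec d)) :
  is_factorization M (vzero d) s -> s = [::].
Proof.
case: s => [//|a s] [Hs E]; have [_ [anz _]] := Hs a (mem_head _ _).
have := weight_gt0 anz; have := congr1 weight E.
by rewrite [vsum _]/= weightD weight0 => /eqP; rewrite addn_eq0 => /andP [/eqP ->].
Qed.

End FreeMonoid.

Local Open Scope ring_scope.

Section Functionals.
Variables (R : realFieldType) (d : nat).
Implicit Types (w v : 'rV[R]_d) (x y : nvec d).

Lemma embedD x y : embed R (vadd x y) = embed R x + embed R y.
Proof. by apply/rowP => i; rewrite !mxE ffunE natrD. Qed.

Lemma embed0 : embed R (vzero d) = 0.
Proof. by apply/rowP => i; rewrite !mxE ffunE. Qed.

Lemma embed_inj : injective (embed R (d := d)).
Proof.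
move=> x y /rowP E; apply/ffunP => i.
by have /eqP := E i; rewrite !mxE eqr_nat => /eqP.
Qed.

Lemma embed_nmul k x : embed R (nmul k x) = k%:R *: embed R x.
Proof.
elim: k => [|k IH] /=; first by rewrite embed0 scale0r.
by rewrite embedD IH mulrSr scalerDl scale1r addrC.
Qed.

Lemma dotvD w u v : dotv w (u + v) = dotv w u + dotv w v.
Proof. by rewrite /dotv -big_split; apply: eq_bigr => i _; rewrite mxE mulrDr. Qed.

Lemma dotvZ w k v : dotv w (k *: v) = k * dotv w v.
Proof. by rewrite /dotv mulr_sumr; apply: eq_bigr => i _; rewrite mxE mulrCA. Qed.

Lemma dotv0 w : dotv w 0 = 0.
Proof. by rewrite /dotv big1 // => i _; rewrite mxE mulr0. Qed.

Lemma dotv_sum w (I : Type) (r : seq I) (F : I -> 'rV[R]_d) :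
  dotv w (\sum_(i <- r) F i) = \sum_(i <- r) dotv w (F i).
Proof. exact: (big_morph _ (dotvD w) (dotv0 w)). Qed.

Variable M : nvec d -> Prop.

Lemma in_V0 : in_V M (0 : 'rV[R]_d).
Proof. by exists [::], [::]; rewrite big_ord0. Qed.

Lemma in_V_embed x : M x -> in_V M (embed R x).
Proof.
move=> Mx; exists [:: x], [:: 1]; rewrite big_ord1 /= scale1r; split => //.
by move=> z; rewrite inE => /eqP ->.
Qed.

Lemma dotv_factorization w c x s :
  (forall a, is_atom M a -> dotv w (embed R a) = c) ->
  is_factorization M x s -> dotv w (embed R x) = (size s)%:R * c.
Proof.
move=> Hat [Hs <-]; elim: s Hs => [|a s IH] Hs /=.
  by rewrite embed0 dotv0 mul0r.
rewrite embedD dotvD IH => [|b bs]; last by apply: Hs; rewrite inE bs orbT.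
rewrite Hat; last by apply: Hs; rewrite mem_head.
by rewrite mulrSr mulrDl mul1r addrC.
Qed.

Lemma hyperplane_level (H : 'rV[R]_d -> Prop) w c :
  (forall v, H v <-> in_V M v /\ dotv w v = c) -> ~ H 0 ->
  (forall a, is_atom M a -> H (embed R a)) ->
  c != 0 /\ forall a, is_atom M a -> dotv w (embed R a) = c.
Proof.
move=> HH nH0 Hat; split; last by move=> a /Hat /HH [].
by apply/eqP => c0; apply: nH0; apply/HH; rewrite dotv0 c0; split; first exact: in_V0.
Qed.

Section Level.
Variables (w : 'rV[R]_d) (c : R).
Hypotheses (c_neq0 : c != 0) (atom_level : forall a, is_atom M a -> dotv w (embed R a) = c).

Lemma factorization_size x s :
  is_factorization M x s -> (size s)%:R = dotv w (embed R x) / c.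
Proof. by move=> Fs; rewrite (dotv_factorization atom_level Fs) mulfK. Qed.

Lemma level_HFM : HFM M.
Proof.
split=> [x|x s t _ _ Fs Ft]; first exact: factorization_exists.
by apply/eqP; rewrite -(eqr_nat R) (factorization_size Fs) (factorization_size Ft).
Qed.

(* An element of M of level c has factorizations of length 1 only. *)
Lemma level_atom x : M x -> dotv w (embed R x) = c -> is_atom M x.
Proof.
move=> Mx Ex; have [[|a [|b s]] Fs] := factorization_exists Mx;
  have := factorization_size Fs; rewrite Ex divff //=.
- by move/eqP; rewrite eq_sym oner_eq0.
- by move=> _; case: Fs => Hs; rewrite /= vaddv0 => <-; apply: Hs; rewrite mem_head.
- by rewrite -[in RHS](mulr1n 1) => /eqP; rewrite eqr_nat.
Qed.

End Level.
End Functionals.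

Definition pos_part (z : int) : nat := if z is Posz n then n else 0%N.
Definition neg_part (z : int) : nat := if z is Negz n then n.+1 else 0%N.

Lemma int_parts (S : pzRingType) (z : int) :
  z%:~R = (pos_part z)%:R - (neg_part z)%:R :> S.
Proof. by case: z => n /=; rewrite ?subr0 // NegzE mulrNz sub0r. Qed.

Section Length.
Variables (d : nat) (M : nvec d -> Prop).
Hypotheses (subM : is_submonoid M) (hfm : HFM M).
Implicit Types x y : nvec d.

Lemma M0 : M (vzero d). Proof. by case: subM. Qed.

Lemma MD x y : M x -> M y -> M (vadd x y).
Proof. by case: subM => _; apply. Qed.

Definition has_length x n := exists s, is_factorization M x s /\ size s = n.

(* By half-factoriality (and since 0 has only the empty factorization), an
   element of M has a unique length. *)
Lemma has_length_uniq x n m : M x -> has_length x n -> has_length x m -> n = m.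
Proof.
move=> Mx [s [Fs <-]] [t [Ft <-]].
case: (classic (x = vzero d)) => [E|nz]; last exact: hfm.2 x s t Mx nz Fs Ft.
by subst x; rewrite (factorization_zero Fs) (factorization_zero Ft).
Qed.

Lemma has_lengthD x y n m :
  has_length x n -> has_length y m -> has_length (vadd x y) (n + m).
Proof.
move=> [s [[Hs <-] <-]] [t [[Ht <-] <-]]; exists (s ++ t).
rewrite size_cat -vsum_cat; split=> //; split=> // a.
by rewrite mem_cat => /orP [/Hs|/Ht].
Qed.

Definition ell x := epsilon (inhabits 0%N) (has_length x).

Lemma ellP x : M x -> has_length x (ell x).
Proof.
move=> Mx; apply: epsilon_spec.
by have [s Fs] := factorization_exists Mx; exists (size s), s.
Qed.

Lemma ell_eq x n : M x -> has_length x n -> ell x = n.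
Proof. by move=> Mx; apply: has_length_uniq Mx (ellP Mx). Qed.

Lemma ellD x y : M x -> M y -> ell (vadd x y) = (ell x + ell y)%N.
Proof. by move=> Mx My; apply: ell_eq (MD Mx My) (has_lengthD (ellP Mx) (ellP My)). Qed.

Lemma ell_atom a : is_atom M a -> ell a = 1%N.
Proof.
move=> aat; apply: ell_eq aat.1 _; exists [:: a]; split=> //.
split=> [b|]; first by rewrite inE => /eqP ->.
by rewrite /= vaddv0.
Qed.

Lemma ell0 : ell (vzero d) = 0%N.
Proof. by apply: ell_eq M0 _; exists [::]. Qed.

Lemma nmulP k x : M x -> M (nmul k x) /\ ell (nmul k x) = (k * ell x)%N.
Proof.
move=> Mx; elim: k => [|k [Mk Ek]] /=; first by rewrite ell0; split=> //; exact: M0.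
by rewrite ellD // Ek mulSn; split=> //; exact: MD.
Qed.

Section Combination.
Variables (I : finType) (t : I -> nvec d).
Hypothesis Mt : forall i, M (t i).

Definition ncomb (k : I -> nat) := \big[@vadd d/vzero d]_i nmul (k i) (t i).

Lemma ncombP k : M (ncomb k) /\ ell (ncomb k) = (\sum_i k i * ell (t i))%N.
Proof.
apply: (big_ind2 (fun x n => M x /\ ell x = n)) => [|x1 n1 x2 n2|i _].
- by rewrite ell0; split=> //; apply: M0.
- by move=> [M1 <-] [M2 <-]; rewrite ellD //; split=> //; apply: MD.
- exact: nmulP.
Qed.

Lemma embed_ncomb k :
  embed rat (ncomb k) = \sum_i (k i)%:R *: embed rat (t i).
Proof.
rewrite /ncomb (big_morph _ (@embedD _ d) (@embed0 _ d)).
by apply: eq_bigr => i _; rewrite embed_nmul.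
Qed.

Lemma common_denominator (q : I -> rat) :
  exists2 N : nat, (0 < N)%N & exists k : I -> int, forall i, N%:R * q i = (k i)%:~R.
Proof.
exists (\prod_i `|denq (q i)|)%N.
  by rewrite prodn_gt0 // => i; rewrite absz_gt0 denq_neq0.
exists (fun i => numq (q i) * (\prod_(j | j != i) `|denq (q j)|)%N%:Z) => i.
rewrite (bigD1 i) //= natrM intrM.
have -> : `|denq (q i)|%N%:R = (denq (q i))%:~R :> rat.
  by rewrite -[X in _ = X%:~R]gez0_abs ?denq_ge0.
by rewrite numqE mulrC mulrA [X in X * _]mulrC.
Qed.

Lemma ell_rational y (q : I -> rat) : M y ->
  embed rat y = \sum_i q i *: embed rat (t i) ->
  (ell y)%:R = \sum_i q i * (ell (t i))%:R.
Proof.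
move=> My Ey; have [N N_gt0 [k Nq]] := common_denominator q.
pose p i := pos_part (k i); pose m i := neg_part (k i).
have kE i : (k i)%:~R = (p i)%:R - (m i)%:R :> rat := int_parts _ (k i).
have [Mm Em] := ncombP m; have Ep := (ncombP p).2; have [MNy EN] := nmulP N My.
(* Scaling by N makes the relation integral: N y + sum m_i t_i = sum p_i t_i. *)
have Nym : vadd (nmul N y) (ncomb m) = ncomb p.
  apply: (@embed_inj rat); rewrite embedD !embed_ncomb embed_nmul Ey.
  rewrite scaler_sumr -big_split; apply: eq_bigr => i _ /=.
  by rewrite scalerA Nq kE -scalerDl subrK.
(* Additivity of ell turns it into the same relation between lengths. *)
have ellE : (N * ell y + \sum_i m i * ell (t i))%N = (\sum_i p i * ell (t i))%N.
  by rewrite -EN -Em -Ep -ellD // Nym.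
have N_neq0 : N%:R != 0 :> rat by rewrite pnatr_eq0 -lt0n.
apply: (mulfI N_neq0); rewrite mulr_sumr -natrM.
have -> : (N * ell y)%:R = (\sum_i p i * ell (t i))%N%:R
                             - (\sum_i m i * ell (t i))%N%:R :> rat.
  by rewrite -ellE natrD addrK.
rewrite !natr_sum -sumrB; apply: eq_bigr => i _.
by rewrite mulrA Nq kE !natrM mulrBl.
Qed.

End Combination.
End Length.

Section RationalSpan.
Variables (d : nat) (M : nvec d -> Prop).

Definition rows_of (s : seq (nvec d)) : 'M[rat]_(size s, d) :=
  \matrix_(i, j) embed rat (nth (vzero d) s i) 0 j.

Lemma row_rows_of s i : row i (rows_of s) = embed rat (nth (vzero d) s i).
Proof. by apply/rowP => j; rewrite !mxE. Qed.

Definition spans (s : seq (nvec d)) :=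
  forall y, M y -> (embed rat y <= rows_of s)%MS.

Lemma row_free_cons y s : row_free (rows_of s) ->
  ~~ (embed rat y <= rows_of s)%MS -> row_free (rows_of (y :: s)).
Proof.
move=> free_s y_out; have rows_s : (rows_of s <= rows_of (y :: s))%MS.
  apply/row_subP => i; rewrite row_rows_of.
  have -> : nth (vzero d) s i = nth (vzero d) (y :: s) (lift ord0 i) by rewrite lift0.
  by rewrite -row_rows_of row_sub.
have y_in : (embed rat y <= rows_of (y :: s))%MS.
  have -> : embed rat y = row ord0 (rows_of (y :: s)) by rewrite (@row_rows_of (y :: s) ord0).
  exact: row_sub.
have lt_s : (rows_of s < rows_of (y :: s))%MS.
  by rewrite ltmxE rows_s; apply: contra y_out => /(submx_trans y_in).
by rewrite /row_free eqn_leq rank_leq_row /=; move: (rank_ltmx lt_s); rewrite (eqP free_s).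
Qed.

Lemma free_spanning_family : exists s : seq (nvec d),
  [/\ forall x, x \in s -> M x, row_free (rows_of s) & spans s].
Proof.
(* Grow a free family from M until it spans or has more than d members;
   the latter is impossible since a free family in Q^d has at most d rows. *)
suff grow k : exists s : seq (nvec d),
    [/\ forall x, x \in s -> M x, row_free (rows_of s) & spans s \/ (k <= size s)%N].
  have [s [Ms free [span|big]]] := grow d.+1; first by exists s.
  by move: (rank_leq_col (rows_of s)); rewrite (eqP free) leqNgt big.
elim: k => [|k [s [Ms free [span|big]]]].
- exists [::]; split=> //; last by right.
  by rewrite /row_free -leqn0 rank_leq_row.
- by exists s; split=> //; left.
- case: (classic (spans s)) => [span|not_span]; first by exists s; split=> //; left.
  have [y y_bad] := not_all_ex_not _ _ not_span.
  have [My y_out] := imply_to_and _ _ y_bad.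
  exists (y :: s); split; last by right.
    by move=> x; rewrite inE => /orP [/eqP ->|/Ms].
  by apply: row_free_cons free _; apply/negP.
Qed.

End RationalSpan.

Lemma length_functional d (M : nvec d -> Prop) :
  is_submonoid M -> HFM M ->
  exists w : 'rV[rat]_d, forall y, M y -> dotv w (embed rat y) = (ell M y)%:R.
Proof.
move=> subM hfm; have [s [Ms free span]] := free_spanning_family M.
pose t (i : 'I_(size s)) := nth (vzero d) s i.
have Mt i : M (t i) by apply: Ms; apply: mem_nth.
have full : row_full (rows_of s)^T by rewrite /row_full mxrank_tr.
have /submxP [w Ew] := submx_full (\row_i (ell M (t i))%:R) full.
have w_t i : dotv w (embed rat (t i)) = (ell M (t i))%:R.
  move/(congr1 (fun A : 'rV_(size s) => A 0 i)): Ew; rewrite !mxE => ->.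
  by apply: eq_bigr => j _; rewrite !mxE.
exists w => y My; have /submxP [u Eu] := span y My.
have Ey : embed rat y = \sum_i u 0 i *: embed rat (t i).
  by rewrite Eu mulmx_sum_row; apply: eq_bigr => i _; rewrite row_rows_of.
rewrite (ell_rational subM hfm Mt My Ey) Ey dotv_sum.
by apply: eq_bigr => i _; rewrite dotvZ w_t.
Qed.

Lemma length_functional_real (R : realFieldType) d (M : nvec d -> Prop) :
  is_submonoid M -> HFM M ->
  exists w : 'rV[R]_d, forall y, M y -> dotv w (embed R y) = (ell M y)%:R.
Proof.
move=> subM hfm; have [w Hw] := length_functional subM hfm.
exists (map_mx ratr w) => y My; rewrite -(ratr_nat R) -Hw // /dotv rmorph_sum.
by apply: eq_bigr => i _; rewrite !mxE rmorphM /= ratr_nat.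
Qed.

(* (=>): for a nontrivial half-factorial M, the atoms lie on the hyperplane
   "length = 1" of V, which avoids the origin. *)
Lemma HFM_hyperplane (R : realFieldType) d (M : nvec d -> Prop) :
  is_submonoid M -> nontrivial M -> HFM M ->
  exists H : 'rV[R]_d -> Prop, [/\ affine_hyperplane_of_V M H, ~ H 0 &
    forall a, is_atom M a -> H (embed R a)].
Proof.
move=> subM [x [Mx x_neq0]] hfm; have [w Hw] := length_functional_real R subM hfm.
have w_atom b : is_atom M b -> dotv w (embed R b) = 1.
  by move=> bat; rewrite Hw ?(ell_atom hfm bat) //; case: bat.
have [a aat] : exists a, is_atom M a.
  have [[|a s] [Hs Es]] := factorization_exists Mx; first by rewrite -Es in x_neq0.
  by exists a; apply: Hs; rewrite mem_head.
exists (fun v => in_V M v /\ dotv w v = 1); split.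
- exists w, 1; split=> //; exists (embed R a); rewrite w_atom //.
  by split; [apply: in_V_embed aat.1 | apply: oner_neq0].
- by case=> _; rewrite dotv0 => /eqP; rewrite eq_sym oner_eq0.
- by move=> b bat; split; [apply: in_V_embed bat.1 | apply: w_atom].
Qed.

Unset Implicit Arguments.

Theorem mainTheorem9 (R : realFieldType) (d : nat) (M : nvec d -> Prop) :
  is_submonoid M -> nontrivial M ->
  (HFM M <->
     exists H : 'rV[R]_d -> Prop,
       affine_hyperplane_of_V M H /\ ~ H 0%R /\
       (forall a, is_atom M a -> H (embed R a))) /\
  (forall H : 'rV[R]_d -> Prop,
     affine_hyperplane_of_V M H -> ~ H 0%R ->
     (forall a, is_atom M a -> H (embed R a)) ->
     forall x, is_atom M x <-> (M x /\ H (embed R x))).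
Proof.
move=> subM ntM; split; first split.
- by move=> hfm; have [H [HV H0 Hat]] := HFM_hyperplane R subM ntM hfm; exists H.
- move=> [H [[w [c [_ HH]]] [nH0 Hat]]].
  have [c_neq0 atom_level] := hyperplane_level HH nH0 Hat.
  exact: level_HFM c_neq0 atom_level.
- move=> H [w [c [_ HH]]] nH0 Hat x.
  have [c_neq0 atom_level] := hyperplane_level HH nH0 Hat.
  split=> [xat|[Mx /HH [_ Hx]]]; first by split; [apply: xat.1 | apply: Hat].
  exact: (level_atom c_neq0 atom_level Mx Hx).
Qed.
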